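(* For $K>K^*:=\frac{b\sigma_1}{b-\mu_0}$ let $G_3(K)=(S(K),I_1(K),0,0,R(K))$ be the unique equilibrium of the system below with $S,I_1,R>0$, and let $R^{**}=\frac{K}{b}(b-\mu_4')$. Then, as $K\to\infty$, $$R(K)=R^{**}+O(1),\qquad I_1(K)=\frac{\mu_4'-\mu_0}{\alpha_1}+O\!\left(\frac1K\right),\qquad S(K)=\frac{\mu_1-\mu_4'}{\alpha_1}+O\!\left(\frac1K\right).$$ In particular $R(K)\to\infty$ as $K\to\infty$, i.e. the recovered component of $G_3$ is not bounded uniformly in $K$.
   Context: Consider, for $t\ge0$, the system $S'=\big(b(1-\tfrac{N}{K})-\alpha_1I_1-\alpha_2I_2-(\beta_1+\beta_2+\alpha_3)I_{12}-\mu_0\big)S$, $I_1'=\big(b(1-\tfrac{N}{K})+\alpha_1S-\eta_1I_{12}-\gamma_1I_2-\mu_1\big)I_1+\beta_1SI_{12}$, $I_2'=\big(b(1-\tfrac{N}{K})+\alpha_2S-\eta_2I_{12}-\gamma_2I_1-\mu_2\big)I_2+\beta_2SI_{12}$, $I_{12}'=\big(b(1-\tfrac{N}{K})+\alpha_3S+\eta_1I_1+\eta_2I_2-\mu_3\big)I_{12}+(\gamma_1+\gamma_2)I_1I_2$, $R'=\big(b(1-\tfrac{N}{K})-\mu_4'\big)R+\rho_1I_1+\rho_2I_2+\rho_3I_{12}$, where $N=S+I_1+I_2+I_{12}+R$. All parameters $b,K,\alpha_i,\beta_i,\gamma_i,\eta_i,\rho_i,\mu_0,\mu_i'$ are positive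 and $\mu_i=\rho_i+\mu_i'$ for $i=1,2,3$; $K$ is regarded as a varying parameter, the others fixed. Standing assumptions: $b>\mu_0$, $b>\mu_i$ ($i=1,2,3$), $b>\mu_4'$, and $\mu_0<\mu_4'<\mu_j'$ for $j=1,2,3$. Set $\sigma_k=(\mu_k-\mu_0)/\alpha_k$ ($k=1,2,3$), assumed to satisfy $\sigma_1<\sigma_2<\sigma_3$, and $S^{**}=\frac{K}{b}(b-\mu_0)$. *)

From Stdlib Require Import Reals.
Open Scope R_scope.

Record params := Params {
  b : R;
  alpha1 : R; alpha2 : R; alpha3 : R;
  beta1 : R; beta2 : R;
  gamma1 : R; gamma2 : R;
  eta1 : R; eta2 : R;
  rho1 : R; rho2 : R; rho3 : R;
  mu0 : R;
  mu1' : R; mu2' : R; mu3' : R; mu4' : R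
}.

Definition mu1 (p : params) := rho1 p + mu1' p.
Definition mu2 (p : params) := rho2 p + mu2' p.
Definition mu3 (p : params) := rho3 p + mu3' p.

Definition sigma1 (p : params) := (mu1 p - mu0 p) / alpha1 p.
Definition sigma2 (p : params) := (mu2 p - mu0 p) / alpha2 p.
Definition sigma3 (p : params) := (mu3 p - mu0 p) / alpha3 p.

Definition standing (p : params) : Prop :=
  0 < b p /\ 0 < alpha1 p /\ 0 < alpha2 p /\ 0 < alpha3 p /\
  0 < beta1 p /\ 0 < beta2 p /\ 0 < gamma1 p /\ 0 < gamma2 p /\
  0 < eta1 p /\ 0 < eta2 p /\ 0 < rho1 p /\ 0 < rho2 p /\ 0 < rho3 p /\
  0 < mu0 p /\ 0 < mu1' p /\ 0 < mu2' p /\ 0 < mu3' p /\ 0 < mu4' p /\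
  mu0 p < b p /\ mu1 p < b p /\ mu2 p < b p /\ mu3 p < b p /\ mu4' p < b p /\
  mu0 p < mu4' p /\ mu4' p < mu1' p /\ mu4' p < mu2' p /\ mu4' p < mu3' p /\
  sigma1 p < sigma2 p /\ sigma2 p < sigma3 p.

Definition Ntot (S I1 I2 I12 Rr : R) := S + I1 + I2 + I12 + Rr.
Definition growth (p : params) (K S I1 I2 I12 Rr : R) :=
  b p * (1 - Ntot S I1 I2 I12 Rr / K).

Definition fS (p : params) (K S I1 I2 I12 Rr : R) :=
  (growth p K S I1 I2 I12 Rr - alpha1 p * I1 - alpha2 p * I2
   - (beta1 p + beta2 p + alpha3 p) * I12 - mu0 p) * S.
Definition fI1 (p : params) (K S I1 I2 I12 Rr : R) :=
  (growth p K S I1 I2 I12 Rr + alpha1 p * S - eta1 p * I12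
   - gamma1 p * I2 - mu1 p) * I1 + beta1 p * S * I12.
Definition fI2 (p : params) (K S I1 I2 I12 Rr : R) :=
  (growth p K S I1 I2 I12 Rr + alpha2 p * S - eta2 p * I12
   - gamma2 p * I1 - mu2 p) * I2 + beta2 p * S * I12.
Definition fI12 (p : params) (K S I1 I2 I12 Rr : R) :=
  (growth p K S I1 I2 I12 Rr + alpha3 p * S + eta1 p * I1 + eta2 p * I2
   - mu3 p) * I12 + (gamma1 p + gamma2 p) * I1 * I2.
Definition fR (p : params) (K S I1 I2 I12 Rr : R) :=
  (growth p K S I1 I2 I12 Rr - mu4' p) * Rr
  + rho1 p * I1 + rho2 p * I2 + rho3 p * I12.

Definition equilibrium (p : params) (K S I1 I2 I12 Rr : R) : Prop :=
  fS p K S I1 I2 I12 Rr = 0 /\ fI1 p K S I1 I2 I12 Rr = 0 /\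
  fI2 p K S I1 I2 I12 Rr = 0 /\ fI12 p K S I1 I2 I12 Rr = 0 /\
  fR p K S I1 I2 I12 Rr = 0.

Definition Kstar (p : params) := b p * sigma1 p / (b p - mu0 p).
Definition Rss (p : params) (K : R) := K / b p * (b p - mu4' p).

(* With I2 = I12 = 0 the equations for S and I1 pin the common growth rate
   g = b (1 - N/K) to g = alpha1 I1 + mu0 = mu1 - alpha1 S, so S and I1 are
   affine in the defect d = mu4' - g, and the equation for R reads
   d R = rho1 I1.  Since I1 < (mu4' - mu0)/alpha1, d R is bounded; since
   N = K (b - g)/b, R grows like R** = K (b - mu4')/b.  Hence d = O(1/K),
   which gives all three expansions. *)
From Stdlib Require Import Reals Lra Psatz.
Open Scope R_scope.

Lemma standing_basic (p : params) : standing p ->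
  0 < b p /\ 0 < alpha1 p /\ 0 < rho1 p /\
  mu0 p < mu4' p /\ mu4' p < b p /\ mu4' p < mu1 p.
Proof.
  intros (Hb & Ha1 & _ & _ & _ & _ & _ & _ & _ & _ & Hr1 & _ & _ & _ & Hm1' &
          _ & _ & _ & _ & _ & _ & _ & H4b & H04 & H41 & _).
  unfold mu1; repeat split; lra.
Qed.

Definition defect_const (p : params) : R :=
  2 * b p * (rho1 p * (mu4' p - mu0 p) / alpha1 p) / (b p - mu4' p).

Section BoundaryEquilibrium.

Variables (p : params) (K S I Rr : R).
Hypotheses (Hb : 0 < b p) (Ha1 : 0 < alpha1 p) (Hr1 : 0 < rho1 p)
  (H04 : mu0 p < mu4' p) (H4b : mu4' p < b p) (H41 : mu4' p < mu1 p).
Hypotheses (HK : 0 < K) (HS : 0 < S) (HI : 0 < I) (HR : 0 < Rr)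
  (Heq : equilibrium p K S I 0 0 Rr).

Let g := growth p K S I 0 0 Rr.
Let d := mu4' p - g.

Lemma growth_eq_I : g = alpha1 p * I + mu0 p.
Proof.
  destruct Heq as (E & _).
  assert (F : (g - alpha1 p * I - mu0 p) * S = 0)
    by (rewrite <- E; unfold fS, g; ring).
  destruct (Rmult_integral _ _ F); lra.
Qed.

Lemma growth_eq_S : g = mu1 p - alpha1 p * S.
Proof.
  destruct Heq as (_ & E & _).
  assert (F : (g + alpha1 p * S - mu1 p) * I = 0)
    by (rewrite <- E; unfold fI1, g; ring).
  destruct (Rmult_integral _ _ F); lra.
Qed.

Lemma defect_mul_R : d * Rr = rho1 p * I.
Proof.
  destruct Heq as (_ & _ & _ & _ & E).
  assert (F : (g - mu4' p) * Rr + rho1 p * I = 0)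
    by (rewrite <- E; unfold fR, g; ring).
  unfold d; lra.
Qed.

Lemma total_eq : S + I + Rr = K * (b p - g) / b p.
Proof. unfold g, growth, Ntot; field; lra. Qed.

Lemma defect_pos : 0 < d.
Proof.
  pose proof defect_mul_R.
  destruct (Rlt_or_le 0 d) as [|Hd]; [assumption|nra].
Qed.

Lemma I_deviation : I - (mu4' p - mu0 p) / alpha1 p = - d / alpha1 p.
Proof.
  assert (HIg : I = (g - mu0 p) / alpha1 p)
    by (rewrite growth_eq_I; field; lra).
  rewrite HIg; unfold d; field; lra.
Qed.

Lemma S_deviation : S - (mu1 p - mu4' p) / alpha1 p = d / alpha1 p.
Proof.
  assert (HSg : S = (mu1 p - g) / alpha1 p)
    by (rewrite growth_eq_S; field; lra).
  rewrite HSg; unfold d; field; lra.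
Qed.

Lemma R_deviation : Rr - Rss p K = K * d / b p - sigma1 p.
Proof.
  assert (HRr : Rr = K * (b p - g) / b p - S - I) by (rewrite <- total_eq; ring).
  assert (HSI : S + I = sigma1 p).
  { pose proof growth_eq_I; pose proof growth_eq_S.
    unfold sigma1; apply (Rmult_eq_reg_l (alpha1 p)); [field_simplify; lra|lra]. }
  rewrite HRr; unfold Rss, d.
  replace (K * (b p - g) / b p - S - I) with (K * (b p - g) / b p - (S + I)) by ring.
  rewrite HSI; field; lra.
Qed.

Lemma defect_mul_R_lt : d * Rr < rho1 p * (mu4' p - mu0 p) / alpha1 p.
Proof.
  assert (HIlt : I < (mu4' p - mu0 p) / alpha1 p).
  { pose proof I_deviation; pose proof defect_pos.
    assert (0 < d / alpha1 p) by (apply Rdiv_lt_0_compat; lra). lra. }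
  rewrite defect_mul_R; unfold Rdiv; rewrite Rmult_assoc.
  apply Rmult_lt_compat_l; lra.
Qed.

Hypothesis (Hlarge : 2 * sigma1 p < Rss p K).

Lemma R_gt_half_Rss : Rss p K / 2 < Rr.
Proof.
  pose proof R_deviation; pose proof defect_pos.
  assert (0 < K * d / b p) by (apply Rdiv_lt_0_compat; nra).
  lra.
Qed.

Lemma defect_le : d <= defect_const p / K.
Proof.
  pose proof defect_mul_R_lt; pose proof R_gt_half_Rss; pose proof defect_pos.
  set (A := rho1 p * (mu4' p - mu0 p) / alpha1 p) in *.
  assert (HdK : d * (K * (b p - mu4' p)) < 2 * b p * A).
  { assert (d * (Rss p K / 2) < A) by nra.
    unfold Rss in *.
    replace (d * (K * (b p - mu4' p))) with (2 * b p * (d * (K / b p * (b p - mu4' p) / 2)))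
      by (field; lra).
    nra. }
  unfold defect_const; fold A.
  apply (Rmult_le_reg_r (K * (b p - mu4' p))); [nra|].
  replace (2 * b p * A / (b p - mu4' p) / K * (K * (b p - mu4' p))) with (2 * b p * A)
    by (field; lra).
  lra.
Qed.

Lemma defect_div_alpha1_le : d / alpha1 p <= defect_const p / alpha1 p / K.
Proof.
  replace (defect_const p / alpha1 p / K) with (defect_const p / K / alpha1 p)
    by (field; lra).
  apply Rmult_le_compat_r; [left; apply Rinv_0_lt_compat|apply defect_le]; lra.
Qed.

Lemma I_deviation_le :
  Rabs (I - (mu4' p - mu0 p) / alpha1 p) <= defect_const p / alpha1 p / K.
Proof.
  pose proof defect_div_alpha1_le.
  assert (0 < d / alpha1 p) by (apply Rdiv_lt_0_compat; [apply defect_pos|lra]).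
  rewrite I_deviation, Rabs_left; [|unfold Rdiv in *; lra].
  unfold Rdiv in *; lra.
Qed.

Lemma S_deviation_le :
  Rabs (S - (mu1 p - mu4' p) / alpha1 p) <= defect_const p / alpha1 p / K.
Proof.
  pose proof defect_div_alpha1_le.
  assert (0 < d / alpha1 p) by (apply Rdiv_lt_0_compat; [apply defect_pos|lra]).
  rewrite S_deviation, Rabs_right; lra.
Qed.

Lemma R_deviation_le : Rabs (Rr - Rss p K) <= defect_const p / b p + sigma1 p.
Proof.
  assert (HKd : K * d <= defect_const p).
  { pose proof defect_le.
    replace (defect_const p) with (K * (defect_const p / K)) by (field; lra).
    apply Rmult_le_compat_l; lra. }
  assert (Hsig : 0 < sigma1 p) by (apply Rdiv_lt_0_compat; lra).
  assert (0 < K * d / b p) by (apply Rdiv_lt_0_compat; [pose proof defect_pos; nra|lra]).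
  assert (K * d / b p <= defect_const p / b p)
    by (apply Rmult_le_compat_r; [left; apply Rinv_0_lt_compat|]; lra).
  rewrite R_deviation; apply Rabs_le; lra.
Qed.

End BoundaryEquilibrium.

Lemma Rss_unbounded (p : params) : 0 < b p -> mu4' p < b p ->
  forall M, exists K0, forall K, K0 < K -> M < Rss p K.
Proof.
  intros Hb H4b M; exists (M * b p / (b p - mu4' p)); intros K HM.
  apply (Rmult_lt_compat_r ((b p - mu4' p) / b p)) in HM;
    [|apply Rdiv_lt_0_compat; lra].
  replace (M * b p / (b p - mu4' p) * ((b p - mu4' p) / b p)) with M in HM
    by (field; lra).
  replace (Rss p K) with (K * ((b p - mu4' p) / b p)) by (unfold Rss; field; lra).
  exact HM.
Qed.

Lemma Kstar_pos (p : params) : standing p -> 0 < Kstar p.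
Proof.
  intros Hst; destruct (standing_basic p Hst) as (Hb & Ha1 & _ & H04 & H4b & H41).
  unfold Kstar, sigma1.
  assert (0 < (mu1 p - mu0 p) / alpha1 p) by (apply Rdiv_lt_0_compat; lra).
  apply Rdiv_lt_0_compat; [apply Rmult_lt_0_compat|]; lra.
Qed.

Theorem mainTheorem10 (p : params) (Sf I1f Rf : R -> R) :
  standing p ->
  (forall K, Kstar p < K ->
     0 < Sf K /\ 0 < I1f K /\ 0 < Rf K /\
     equilibrium p K (Sf K) (I1f K) 0 0 (Rf K)) ->
  (exists C K0, forall K, K0 < K -> Rabs (Rf K - Rss p K) <= C) /\
  (exists C K0, forall K, K0 < K ->
     Rabs (I1f K - (mu4' p - mu0 p) / alpha1 p) <= C / K) /\
  (exists C K0, forall K, K0 < K ->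
     Rabs (Sf K - (mu1 p - mu4' p) / alpha1 p) <= C / K) /\
  (forall M, exists K0, forall K, K0 < K -> M < Rf K).
Proof.
  intros Hst Heq.
  destruct (standing_basic p Hst) as (Hb & Ha1 & Hr1 & H04 & H4b & H41).
  pose proof (Kstar_pos p Hst) as HKs.
  assert (Hlarge : forall M, exists K0, Kstar p <= K0 /\
            forall K, K0 < K -> M < Rss p K).
  { intros M; destruct (Rss_unbounded p Hb H4b M) as [K1 HK1].
    exists (Rmax (Kstar p) K1); split; [apply Rmax_l|].
    intros K HK; apply HK1; eapply Rle_lt_trans; [apply Rmax_r|exact HK]. }
  destruct (Hlarge (2 * sigma1 p)) as (K0 & HK0 & Hbig).
  assert (Hequil : forall K, K0 < K ->
            0 < K /\ 2 * sigma1 p < Rss p K /\ 0 < Sf K /\ 0 < I1f K /\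
            0 < Rf K /\ equilibrium p K (Sf K) (I1f K) 0 0 (Rf K)).
  { intros K HK; split; [lra|split; [auto|apply Heq; lra]]. }
  split; [|split; [|split]].
  - exists (defect_const p / b p + sigma1 p), K0; intros K HK.
    destruct (Hequil K HK) as (? & ? & ? & ? & ? & ?); apply (R_deviation_le p K (Sf K) (I1f K) (Rf K)); auto.
  - exists (defect_const p / alpha1 p), K0; intros K HK.
    destruct (Hequil K HK) as (? & ? & ? & ? & ? & ?); apply (I_deviation_le p K (Sf K) (I1f K) (Rf K)); auto.
  - exists (defect_const p / alpha1 p), K0; intros K HK.
    destruct (Hequil K HK) as (? & ? & ? & ? & ? & ?); apply (S_deviation_le p K (Sf K) (I1f K) (Rf K)); auto.
  - intros M; destruct (Hlarge (2 * M)) as (K1 & _ & HM).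
    exists (Rmax K0 K1); intros K HK.
    assert (HK0' : K0 < K) by (eapply Rle_lt_trans; [apply Rmax_l|exact HK]).
    assert (2 * M < Rss p K) by (apply HM; eapply Rle_lt_trans; [apply Rmax_r|exact HK]).
    destruct (Hequil K HK0') as (? & ? & ? & ? & ? & ?).
    assert (Rss p K / 2 < Rf K) by (apply (R_gt_half_Rss p K (Sf K) (I1f K) (Rf K)); auto).
    lra.
Qed.
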